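(* Let $G_1$ and $G_2$ be finite groups each satisfying: for all $x,y$, $x^2=1$ or $y^2=1$ or $xy=yx$. Suppose that every abelian section of $G_2$ is isomorphic to a section of $G_1$, and that $G_1$ is nonabelian. Then $G_2$ is isomorphic to a section of $G_1$.
   Context: A section of a group is a quotient of one of its subgroups. *)

From mathcomp Require Import all_boot all_fingroup.
Set Implicit Arguments. Unset Strict Implicit. Unset Printing Implicit Defensive.
Local Open Scope group_scope.

Definition sq_or_comm (gT : finGroupType) (G : {set gT}) : Prop :=
  forall x y, x \in G -> y \in G -> x ^+ 2 = 1 \/ y ^+ 2 = 1 \/ commute x y.

Definition isog_section (rT gT : finGroupType) (S : {set rT}) (G : {set gT}) : Prop :=
  exists (H K : {group gT}), [/\ H \subset G, K <| H & S \isog (H / K)].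

From mathcomp Require Import all_boot all_fingroup.
From mathcomp Require Import cyclic abelian.
Set Implicit Arguments. Unset Strict Implicit. Unset Printing Implicit Defensive.
Local Open Scope group_scope.

(* The elements x with
   x^2 <> 1 commute pairwise, so they generate an abelian subgroup A, and
   every element of G outside A is an involution inverting A.  If G is
   nonabelian, A does not have exponent 2 and G = A x| <t> for any t outside
   A: G is the generalized dihedral group of A, so A determines G.
   For G2 nonabelian, A2 is an abelian section H / K of G1.  If H met G1 \ A1,
   every element of H would be a product of involutions of G1 \ A1, so H / K
   would have exponent 2, unlike A2; hence H <= A1, and for t1 in G1 \ A1 the
   section (H <t1>) / K is the generalized dihedral group of H / K ~ A2. *)

Lemma invg_sqr1 (gT : finGroupType) (x : gT) : x ^+ 2 = 1 -> x^-1 = x.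
Proof. by move=> x2; apply/eqP; rewrite eq_invg_mul -x2 expgS expg1. Qed.

Section InvertingInvolution.

Variable gT : finGroupType.
Implicit Types (A : {set gT}) (B K : {group gT}) (t : gT).

Definition inverting_involution A t :=
  [/\ t \notin A, t ^+ 2 = 1 & {in A, forall a, a ^ t = a^-1}].

Lemma inverting_norm A K t :
  {in A, forall a, a ^ t = a^-1} -> K \subset A -> t \in 'N(K).
Proof.
move=> invA sKA; rewrite inE; apply/subsetP=> _ /imsetP[k Kk ->].
by rewrite invA ?(subsetP sKA) // groupV.
Qed.

Lemma inverting_involutionS A B t :
  B \subset A -> inverting_involution A t -> inverting_involution B t.
Proof.
move=> sBA [At t2 invA]; split=> //; first exact: contra (subsetP sBA t) At.
by move=> b /(subsetP sBA)/invA.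
Qed.

Lemma order_inverting_involution B t : inverting_involution B t -> #[t] = 2.
Proof.
case=> Bt t2 _; apply: nt_prime_order => //.
by apply: contraNneq Bt => ->; apply: group1.
Qed.

Lemma sdprod_inverting_involution B t :
  inverting_involution B t -> B ><| <[t]> = B <*> <[t]>.
Proof.
move=> invt; have [Bt _ invB] := invt.
apply: sdprodEY; first by rewrite cycle_subG (inverting_norm invB).
rewrite setIC prime_TIg // -?orderE ?(order_inverting_involution invt) //.
by rewrite cycle_subG.
Qed.

End InvertingInvolution.

Lemma quotient_inverting_involution (gT : finGroupType) (H K : {group gT}) t :
    K <| H -> inverting_involution H t ->
  inverting_involution (H / K) (coset K t).
Proof.
move=> nsKH [Ht t2 invH]; have nKt := inverting_norm invH (normal_sub nsKH).
split.
- by apply: contra Ht => HKt; rewrite -(quotientGK nsKH) mem_morphpre.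
- by rewrite -morphX // t2 morph1.
- move=> _ /morphimP[h Nh Hh ->].
  by rewrite -morphJ // invH // morphV.
Qed.

Lemma isog_join_inverting_involution (aT rT : finGroupType)
    (A : {group aT}) (t : aT) (B : {group rT}) (s : rT) :
    inverting_involution A t -> inverting_involution B s ->
  A \isog B -> A <*> <[t]> \isog B <*> <[s]>.
Proof.
move=> invt invs /isogP[f injf fA].
have [_ _ invA] := invt; have [_ _ invB] := invs.
have ot := order_inverting_involution invt.
have os := order_inverting_involution invs.
have dvd_st : #[s] %| #[t] by rewrite ot os.
have actf : {in A & <[t]>, morph_act 'J 'J f (eltm dvd_st)}.
  move=> a u Aa; rewrite cycle2g // => /set2P[->|->] /=.
    by rewrite conjg1 morph1 conjg1.
  have fAa : f a \in B by rewrite -fA mem_morphim.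
  by rewrite eltm_id invA // morphV // invB.
have /sdprodP[_ defB _ tiBs] := sdprod_inverting_involution invs.
apply/isogP; exists (sdprodm (sdprod_inverting_involution invt) actf).
  by rewrite injm_sdprodm injf injm_eltm ot os /= fA im_eltm tiBs.
by rewrite im_sdprodm fA im_eltm defB.
Qed.

Section NonInvolutions.

Variables (gT : finGroupType) (G : {group gT}).

Definition noninv : {group gT} := [group of <<[set x in G | x ^+ 2 != 1]>>].

Lemma noninv_sub : noninv \subset G.
Proof. by rewrite gen_subG; apply/subsetP=> x /setIdP[]. Qed.

Lemma sqr_notin_noninv x : x \in G -> x \notin noninv -> x ^+ 2 = 1.
Proof. by move=> Gx; apply: contraNeq => x2; rewrite mem_gen // inE Gx. Qed.

Lemma noninv_inverting_involution t :
  t \in G -> t \notin noninv -> inverting_involution noninv t.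
Proof.
move=> Gt At; have t2 := sqr_notin_noninv Gt At; split=> // a Aa.
have Gat : a * t \in G := groupM (subsetP noninv_sub a Aa) Gt.
have ax2 : (a * t) ^+ 2 = 1 by rewrite sqr_notin_noninv // groupMl.
apply/eqP; rewrite eq_sym eq_invg_mul conjgE invg_sqr1 //.
by rewrite -ax2 expgS expg1 !mulgA.
Qed.

Lemma noninv_exponent : ~~ abelian G -> ~~ (exponent noninv %| 2).
Proof.
apply: contra => /exponentP expA; apply: (@abelem_abelian _ 2).
apply/exponent2_abelem/exponentP => x Gx.
by have [/expA | /(sqr_notin_noninv Gx)] := boolP (x \in noninv).
Qed.

(* If x and x t were both outside noninv G, both would invert it, so t would
   centralise it while inverting it, and its exponent would divide 2. *)
Lemma noninv_joinE t :
  ~~ abelian G -> t \in G -> t \notin noninv -> noninv <*> <[t]> = G.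
Proof.
move=> nabG Gt At; apply/eqP.
rewrite eqEsubset join_subG noninv_sub cycle_subG Gt /=.
have [_ _ invt] := noninv_inverting_involution Gt At.
apply/subsetP=> x Gx; have [Ax | Ax] := boolP (x \in noninv).
  exact: subsetP (joing_subl _ _) x Ax.
suff Axt : x * t \in noninv.
  rewrite -(mulgK t x) groupM ?groupV //.
    exact: subsetP (joing_subl _ _) _ Axt.
  exact: subsetP (joing_subr _ _) _ (cycle_id t).
apply: contraR (noninv_exponent nabG) => Axt; apply/exponentP=> a Aa.
have [_ _ invxt] := noninv_inverting_involution (groupM Gx Gt) Axt.
have [_ _ invx] := noninv_inverting_involution Gx Ax.
have aV : a = a^-1 by rewrite -invxt // conjgM invx // invt ?groupV // invgK.
by rewrite expgS expg1 {1}aV mulVg.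
Qed.

Lemma sub_noninv_morphim (rT : finGroupType) (D H : {group gT})
    (f : {morphism D >-> rT}) :
    H \subset G -> H \subset D -> abelian (f @* H) ->
  ~~ (exponent (f @* H) %| 2) -> H \subset noninv.
Proof.
move=> sHG sHD abfH; apply: contraR => /subsetPn[h Hh Ah].
have hV : h^-1 = h by rewrite invg_sqr1 // sqr_notin_noninv ?(subsetP sHG).
have fy2 y : y \in H -> y \notin noninv -> f y ^+ 2 = 1.
  move=> Hy Ay; rewrite -morphX ?(subsetP sHD) //.
  by rewrite sqr_notin_noninv ?(subsetP sHG) ?morph1.
apply/exponentP=> _ /morphimP[y Dy Hy ->].
have [Ay | /(fy2 y Hy)//] := boolP (y \in noninv).
have Hhy : h * y \in H by rewrite groupM.
have -> : y = h * (h * y) by rewrite -{1}hV mulKg.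
rewrite morphM ?(subsetP sHD) // expgMn; last first.
  by apply: (centsP abfH); rewrite mem_morphim ?(subsetP sHD).
by rewrite !fy2 ?mulg1 ?groupMr.
Qed.

Hypothesis sqG : sq_or_comm G.

Lemma noninv_abelian : abelian noninv.
Proof.
rewrite abelian_gen; apply/centsP=> x /setIdP[Gx x2] y /setIdP[Gy y2].
by have [/eqP | [/eqP |]] := sqG Gx Gy; rewrite ?(negPf x2) ?(negPf y2).
Qed.

Lemma noninv_proper : ~~ abelian G -> noninv \proper G.
Proof.
move=> nabG; rewrite properEneq noninv_sub andbT.
by apply: contraNneq nabG => <-; apply: noninv_abelian.
Qed.

End NonInvolutions.

Theorem lemma6 (gT1 gT2 : finGroupType) (G1 : {group gT1}) (G2 : {group gT2}) :
  sq_or_comm G1 -> sq_or_comm G2 ->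
  (forall H K : {group gT2}, H \subset G2 -> K <| H ->
     abelian (H / K) -> isog_section (H / K) G1) ->
  ~~ abelian G1 ->
  isog_section G2 G1.
Proof.
move=> sqG1 sqG2 abelian_sections nabG1.
have [abG2 | nabG2] := boolP (abelian G2).
  have [H [K [sHG1 nsKH isoG2]]] :=
    abelian_sections G2 1%G (subxx _) (normal1 _) (quotient_abelian _ abG2).
  by exists H, K; split=> //; apply: isog_trans (quotient1_isog G2) isoG2.
have [H [K [sHG1 nsKH isoA2]]] := abelian_sections (noninv G2) 1%G
  (noninv_sub G2) (normal1 _) (quotient_abelian _ (noninv_abelian sqG2)).
have {}isoA2 := isog_trans (quotient1_isog _) isoA2.
have sHA1 : H \subset noninv G1.
  apply: (sub_noninv_morphim (f := coset_morphism K)) sHG1 (normal_norm nsKH) _ _.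
    by have := noninv_abelian sqG2; rewrite (isog_abelian isoA2).
  by have := noninv_exponent nabG2; rewrite (exponent_isog isoA2).
have [_ [t1 G1t1 A1t1]] := properP (noninv_proper sqG1 nabG1).
have [_ [t2 G2t2 A2t2]] := properP (noninv_proper sqG2 nabG2).
have invH := inverting_involutionS sHA1 (noninv_inverting_involution G1t1 A1t1).
have [_ _ invt1] := invH; have nKt1 := inverting_norm invt1 (normal_sub nsKH).
exists (H <*> <[t1]>)%G, K; split.
- by rewrite join_subG sHG1 cycle_subG.
- rewrite /normal (subset_trans (normal_sub nsKH)) ?joing_subl //.
  by rewrite join_subG normal_norm // cycle_subG.
rewrite -(noninv_joinE nabG2 G2t2 A2t2) quotientY ?cycle_subG ?normal_norm //.
rewrite quotient_cycle //; apply: isog_join_inverting_involution isoA2.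
  exact: noninv_inverting_involution.
exact: quotient_inverting_involution.
Qed.
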